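(* Let $A,B,C$ be an LR triple on $V$ and let $\overline A$ be the set of elements of $\mathrm{End}(V)$ that weakly lower both the $(A,B)$-decomposition and the $(A,C)$-decomposition of $V$. (i) If $A,B,C$ is trivial then $\overline A=0$. (ii) If $A,B,C$ is nonbipartite then $A$ is a basis of $\overline A$, so $\dim\overline A=1$. (iii) If $A,B,C$ is bipartite and nontrivial then $AJ,JA$ form a basis of $\overline A$, so $\dim\overline A=2$, where $J=\sum_{j=0}^{d/2}E_{2j}$.
   Context: Let $V$ be a vector space over a field $\mathbb F$ with $\dim V=d+1$. A decomposition of $V$ is a sequence $(V_i)_{i=0}^d$ of one-dimensional subspaces with $V=\bigoplus V_i$; $X$ lowers it if $XV_i=V_{i-1}$ ($1\le i\le d$), $XV_0=0$; raises it if $XV_i=V_{i+1}$ ($0\le i\le d-1$), $XV_d=0$; $X$ weakly lowers it if $XV_i\subseteq V_{i-1}$ ($1\le i\le d$) and $XV_0=0$. An ordered pair $X,Y$ is an LR pair if some decomposition (unique, the $(X,Y)$-decomposition) is lowered by $X$ and raised by $Y$. An LR triple is $A,B,C\in\mathrm{End}(V)$ such that each ordered pair of distinct elements among $A,B,C$ is an LR pair; it is trivial if $d=0$. Let $E_i,E'_i,E''_i$ be the projections onto the $i$-th components of the $(A,B)$-, $(B,C)$-, $(C,A)$-decompositions. It is bipartite if $\mathrm{tr}(CE_i)=\mathrm{tr}(AE'_i)=\mathrm{tr}(BE''_i)=0$ for all $i$ (then $d$ is even), nonbipartite otherwise. *)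

(* V = 'rV[F]_(d.+1) (row vectors), End(V) = 'M[F]_(d.+1),
   a matrix X acting by v |-> v *m X; subspaces are row spaces (mxalgebra). *)
From HB Require Import structures.
From mathcomp Require Import all_boot all_order all_algebra.
Set Implicit Arguments. Unset Strict Implicit. Unset Printing Implicit Defensive.
Import GRing.Theory.
Local Open Scope ring_scope.

Definition is_decomp (F : fieldType) (d : nat) (Vs : 'I_d.+1 -> 'M[F]_d.+1) : Prop :=
  (forall i, \rank (Vs i) = 1%N) /\ mxdirect (\sum_i Vs i) /\
  (\sum_i Vs i :=: 1%:M)%MS.

Definition lowers (F : fieldType) (d : nat) (Vs : 'I_d.+1 -> 'M[F]_d.+1)
  (X : 'M[F]_d.+1) : Prop :=
  (forall i : 'I_d.+1, (0 < i)%N -> (Vs i *m X == Vs (inord i.-1))%MS) /\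
  Vs ord0 *m X = 0.

Definition raises (F : fieldType) (d : nat) (Vs : 'I_d.+1 -> 'M[F]_d.+1)
  (X : 'M[F]_d.+1) : Prop :=
  (forall i : 'I_d.+1, (i < d)%N -> (Vs i *m X == Vs (inord i.+1))%MS) /\
  Vs ord_max *m X = 0.

Definition weakly_lowers (F : fieldType) (d : nat) (Vs : 'I_d.+1 -> 'M[F]_d.+1)
  (X : 'M[F]_d.+1) : Prop :=
  (forall i : 'I_d.+1, (0 < i)%N -> (Vs i *m X <= Vs (inord i.-1))%MS) /\
  Vs ord0 *m X = 0.

Definition is_LRdec (F : fieldType) (d : nat) (Vs : 'I_d.+1 -> 'M[F]_d.+1)
  (X Y : 'M[F]_d.+1) : Prop :=
  is_decomp Vs /\ lowers Vs X /\ raises Vs Y.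

Definition LR_pair (F : fieldType) (d : nat) (X Y : 'M[F]_d.+1) : Prop :=
  exists Vs : 'I_d.+1 -> 'M[F]_d.+1, is_LRdec Vs X Y.

Definition LR_triple (F : fieldType) (d : nat) (A B C : 'M[F]_d.+1) : Prop :=
  LR_pair A B /\ LR_pair B A /\ LR_pair B C /\ LR_pair C B /\ LR_pair C A /\ LR_pair A C.

Definition projE (F : fieldType) (d : nat) (Vs : 'I_d.+1 -> 'M[F]_d.+1)
  (i : 'I_d.+1) : 'M[F]_d.+1 :=
  proj_mx (Vs i) (\sum_(j | j != i) Vs j)%MS.

(* bipartite: tr(C E_i) = tr(A E'_i) = tr(B E''_i) = 0 for all i, where
   E, E', E'' are the projections for the (A,B)-, (B,C)-, (C,A)-decompositions
   (these decompositions are unique, so quantifying over them is harmless). *)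
Definition bipartite (F : fieldType) (d : nat) (A B C : 'M[F]_d.+1) : Prop :=
  forall Vs Vs' Vs'' : 'I_d.+1 -> 'M[F]_d.+1,
    is_LRdec Vs A B -> is_LRdec Vs' B C -> is_LRdec Vs'' C A ->
    forall i : 'I_d.+1,
      [/\ \tr (C *m projE Vs i) = 0, \tr (A *m projE Vs' i) = 0
        & \tr (B *m projE Vs'' i) = 0].

Definition Abar (F : fieldType) (d : nat) (VAB VAC : 'I_d.+1 -> 'M[F]_d.+1)
  (X : 'M[F]_d.+1) : Prop :=
  weakly_lowers VAB X /\ weakly_lowers VAC X.

From HB Require Import structures.
From mathcomp Require Import all_boot all_order all_algebra.
From mathcomp Require Import zify.
Set Implicit Arguments. Unset Strict Implicit. Unset Printing Implicit Defensive.
Import GRing.Theory.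
Local Open Scope ring_scope.

(* Let g span the last component of the (A,B)-decomposition and u_k := g A^k;
   then u_k spans its (d-k)-th component, so (u_k) is a basis in which
   X weakly lowers the (A,B)-decomposition iff u_k X = x_k u_(k+1) for all k.
   Expanding the top vector of the (A,C)-decomposition as w = sum_m t_m u_m
   (with t_0 <> 0) gives w A^k = sum_m t_m u_(m+k), and if X also weakly
   lowers the (A,C)-decomposition, comparing coefficients of w A^j X yields
   t_m x_(m+j) = t_m x_j.  Hence x is constant when t_1 <> 0, i.e. X is a
   multiple of A, and x is 2-periodic when t_2 <> 0, i.e. X is a combination
   of AJ and JA.  It remains to see that the triple is bipartite iff t_1 = 0:
   t_1 is, up to nonzero factors, tr(C E_0); conversely t_1 = 0 forces, through
   the (C,B)-decomposition, t_m = 0 for all odd m and t_2 <> 0, and then each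
   M among A, B, C satisfies J M = M (1 - J), which makes every trace in the
   definition of bipartite vanish. *)

Lemma eqmx_rank1 (F : fieldType) m n (y : 'rV[F]_n) (M : 'M[F]_(m, n)) :
  y != 0 -> \rank M = 1%N -> (y <= M)%MS -> (y :=: M)%MS.
Proof. by move=> ynz rM yM; apply/eqmxP; rewrite -(mxrank_leqif_eq yM) rM rank_rV ynz. Qed.

Lemma sub_kernel_rows (F : fieldType) m n p k (P : 'M[F]_(m, n)) (M : 'M[F]_(n, p))
    (N : 'M[F]_(k, n)) :
  (forall x : 'rV[F]_n, x *m M = 0 -> (x <= N)%MS) -> P *m M = 0 -> (P <= N)%MS.
Proof. by move=> hx hP; apply/row_subP => i; apply: hx; rewrite -row_mul hP row0. Qed.

Lemma big_ord_first2 (V : nmodType) k (G : nat -> V) : (1 < k)%N ->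
  (forall m, (1 < m)%N -> G m = 0) -> \sum_(m < k) G m = G 0%N + G 1%N.
Proof.
case: k => [|[|k]] // _ hG.
by rewrite !big_ord_recl big1 ?addr0 ?addrA // => i _; apply: hG.
Qed.

Lemma memv_span2 (K : fieldType) (vT : vectType K) (u v x : vT) :
  (x \in <<[:: u; v]>>%VS) <-> exists a b, x = a *: u + b *: v.
Proof.
rewrite span_cons span_seq1; split.
  by case/memv_addP => y /vlineP [a ->] [z /vlineP [b ->] ->]; exists a, b.
by case=> a [b ->]; apply: memv_add; apply/vlineP; [exists a | exists b].
Qed.

Lemma eq_odd_of_2periodic (T : Type) (x : nat -> T) d :
  (forall j, (j.+3 <= d)%N -> x j.+2 = x j) -> forall k, (k < d)%N -> x k = x (odd k).
Proof.
move=> hx k; elim: k {-2}k (leqnn k) => [|k IH] [|[|j]] //= hjk hjd.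
by rewrite negbK hx; [apply: IH; lia | lia].
Qed.

Lemma weakly_lowers0 (F : fieldType) d (Vs : 'I_d.+1 -> 'M[F]_d.+1) : weakly_lowers Vs 0.
Proof. by split=> [i _|]; rewrite mulmx0 ?sub0mx. Qed.

Lemma weakly_lowers_dim1 (F : fieldType) (Vs : 'I_1 -> 'M[F]_1) (X : 'M[F]_1) :
  is_decomp Vs -> weakly_lowers Vs X -> X = 0.
Proof.
case=> _ [_ hs] [_ hX0]; have : (1%:M <= Vs ord0)%MS by rewrite -hs big_ord1.
by case/submxP => D hD; rewrite -[X]mul1mx hD -mulmxA hX0 mulmx0.
Qed.

Section DecompositionFacts.
Variables (F : fieldType) (d : nat) (Vs : 'I_d.+1 -> 'M[F]_d.+1).
Hypothesis dec : is_decomp Vs.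
Local Notation n := d.+1.

Lemma rank_decomp i : \rank (Vs i) = 1%N.
Proof. by case: dec. Qed.

Lemma decomp_neq0 i : Vs i != 0.
Proof. by rewrite -mxrank_eq0 rank_decomp. Qed.

Lemma decomp_cap0 i : (Vs i :&: (\sum_(j | j != i) Vs j) = 0)%MS.
Proof. by case: dec => _ [/mxdirect_sumsP/(_ i isT)]. Qed.

Lemma projE_id m (y : 'M[F]_(m, n)) i : (y <= Vs i)%MS -> y *m projE Vs i = y.
Proof. by move=> h; rewrite /projE proj_mx_id ?decomp_cap0. Qed.

Lemma projE_0 m (y : 'M[F]_(m, n)) i j :
  (y <= Vs j)%MS -> j != i -> y *m projE Vs i = 0.
Proof. by move=> h ji; rewrite /projE proj_mx_0 ?decomp_cap0 // (sumsmx_sup j). Qed.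

Lemma sum_mul_projE m (u : 'I_n -> 'M[F]_(m, n)) i :
  (\sum_j u j *m Vs j) *m projE Vs i = u i *m Vs i.
Proof.
rewrite mulmx_suml (bigD1 i) //= projE_id ?submxMl // big1 ?addr0 // => j ji.
by rewrite (projE_0 (j := j)) ?submxMl.
Qed.

Lemma projE_eigen (P : 'M[F]_n) (c : 'I_n -> F) i :
  (forall j, Vs j *m P = c j *: Vs j) ->
  P *m projE Vs i = c i *: projE Vs i /\ projE Vs i *m P = c i *: projE Vs i.
Proof.
move=> hP; have [v hv] : exists v, 1%:M = \sum_j v j *m Vs j.
  by apply/sub_sumsmxP; case: dec => _ [_ ->].
have Ei : projE Vs i = v i *m Vs i by rewrite -sum_mul_projE -hv mul1mx.
split; last by rewrite Ei -mulmxA hP scalemxAr.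
rewrite -[P]mul1mx hv mulmx_suml.
under eq_bigr do rewrite -mulmxA hP -scalemxAr scalemxAl.
by rewrite sum_mul_projE Ei scalemxAl.
Qed.

Lemma mxtrace_mul_projE (M : 'M[F]_n) i (y : 'rV[F]_n) (gam : F) :
  y != 0 -> (y <= Vs i)%MS -> y *m M *m projE Vs i = gam *: y ->
  \tr (M *m projE Vs i) = gam.
Proof.
move=> ynz yY hE.
have : (projE Vs i <= y)%MS.
  rewrite (eqmx_rank1 ynz (rank_decomp i) yY) -[projE Vs i]mul1mx.
  exact: proj_mx_sub.
case/submxP=> l El.
rewrite El mulmxA mxtrace_mulC mulmxA trace_mx11.
move: hE; rewrite El mulmxA [y *m M *m l]mx11_scalar mul_scalar_mx => /eqP.
rewrite -subr_eq0 -scalerBl scaler_eq0 (negbTE ynz) orbF subr_eq0 => /eqP <-.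
by rewrite mxE eqxx mulr1n.
Qed.

Lemma mxtrace_swap_mul_projE (M P : 'M[F]_n) (pb : 'I_n -> bool) i :
  (forall j, Vs j *m P = (if pb j then 0 else Vs j)) ->
  P *m M = M *m (1%:M - P) -> \tr (M *m projE Vs i) = 0.
Proof.
(* tr (M E) = tr (P M E) = tr (M E P) with P E = E P = E or 0, and P M = M (1 - P). *)
move=> hP hPM; set E := projE Vs i.
have hPc j : Vs j *m P = (if pb j then 0 else 1) *: Vs j.
  by rewrite hP; case: (pb j); rewrite ?scale0r ?scale1r.
have [PE EP] := projE_eigen i hPc.
have PME : P *m M *m E = M *m E - M *m (P *m E) by rewrite hPM mulmxBr mulmx1 mulmxBl mulmxA.
have : \tr (P *m M *m E) = \tr (M *m E *m P) by rewrite -mulmxA mxtrace_mulC.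
rewrite PME -mulmxA EP PE.
by case: (pb i); rewrite ?scale0r ?scale1r ?mulmx0 ?subr0 ?subrr mxtrace0 // => /esym.
Qed.

Lemma decomp_mul_parity (R P : 'M[F]_n) (b : bool) :
  raises Vs R -> P *m R = R *m (1%:M - P) ->
  Vs ord0 *m P = (if b then 0 else Vs ord0) ->
  forall i : 'I_n, Vs i *m P = (if b (+) odd i then 0 else Vs i).
Proof.
move=> [hR _] hPR h0 [i hi]; elim: i hi => [|i IH] hi.
  by rewrite addbF; have -> : Ordinal hi = ord0 by apply/val_inj.
have hi' : (i < n)%N by lia.
have : (Vs (Ordinal hi) <= Vs (Ordinal hi') *m R)%MS.
  rewrite (eqmxP (hR (Ordinal hi') hi)).
  by have -> : Ordinal hi = inord (Ordinal hi').+1 by apply/val_inj; rewrite /= inordK.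
case/submxP=> D ->; rewrite [odd _]/=.
have RP : R *m P = R - P *m R by rewrite hPR mulmxBr mulmx1 opprB addrC subrK.
rewrite -!mulmxA RP mulmxBr (mulmxA _ P) IH /= addbN.
by case: (b (+) odd i); rewrite /= ?mul0mx ?subr0 ?subrr ?mulmx0.
Qed.

End DecompositionFacts.

Section OrbitBasis.
Variables (F : fieldType) (d : nat) (Vs : 'I_d.+1 -> 'M[F]_d.+1) (A : 'M[F]_d.+1).
Hypotheses (dec : is_decomp Vs) (low : lowers Vs A).
Local Notation n := d.+1.

Definition orbv k : 'rV[F]_n := nz_row (Vs ord_max) *m A ^+ k.

Lemma orbvS k : orbv k.+1 = orbv k *m A.
Proof. by rewrite /orbv exprSr mulmxA. Qed.

Lemma orbvD k j : orbv (k + j) = orbv k *m A ^+ j.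
Proof. by rewrite /orbv exprD mulmxA. Qed.

Lemma orbv_eqmx k : (k <= d)%N -> (orbv k :=: Vs (inord (d - k)))%MS.
Proof.
elim: k => [|k IH] hk.
  rewrite subn0 /orbv expr0 mulmx1.
  have -> : (inord d : 'I_n) = ord_max by apply/val_inj; rewrite /= inordK.
  by apply: eqmx_rank1; rewrite ?nz_row_eq0 ?decomp_neq0 ?rank_decomp ?nz_row_sub.
rewrite orbvS; apply: eqmx_trans (eqmxMr _ (IH (ltnW hk))) _.
have hpos : (0 < (inord (d - k) : 'I_n))%N by rewrite inordK; lia.
apply: eqmx_trans (eqmxP (low.1 _ hpos)) _.
have -> // : (inord (inord (d - k) : 'I_n).-1 : 'I_n) = inord (d - k.+1).
by apply/val_inj; rewrite /= !inordK; lia.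
Qed.

Lemma orbv_neq0 k : (k <= d)%N -> orbv k != 0.
Proof. by move=> hk; rewrite -mxrank_eq0 (orbv_eqmx hk) rank_decomp. Qed.

Lemma orbv_last : (orbv d :=: Vs ord0)%MS.
Proof.
have -> : (ord0 : 'I_n) = inord (d - d) by apply/val_inj; rewrite subnn /= inordK.
exact: orbv_eqmx.
Qed.

Lemma mul_orbv_last_eq0 p (X : 'M[F]_(n, p)) :
  (orbv d *m X == 0) = (Vs ord0 *m X == 0).
Proof. exact: eqmx_eq0 (eqmxMr X orbv_last). Qed.

Lemma orbv_eq0 k : (d < k)%N -> orbv k = 0.
Proof.
move=> hk; rewrite -(subnKC hk) orbvD orbvS.
have /eqP -> : orbv d *m A == 0 by rewrite mul_orbv_last_eq0 low.2.
by rewrite mul0mx.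
Qed.

Lemma orbv_inord i : (Vs i :=: orbv (d - i))%MS.
Proof.
apply: eqmx_sym; apply: eqmx_trans (orbv_eqmx (leq_subr i d)) _.
have -> // : inord (d - (d - i)) = i.
by apply/val_inj; rewrite /= inordK; have := ltn_ord i; lia.
Qed.

Definition orbmx : 'M[F]_n := \matrix_(i < n) orbv i.

Lemma orbmx_unit : orbmx \in unitmx.
Proof.
rewrite -row_full_unit -sub1mx.
case: dec => _ [_ /eqmxP/andP [_ /submx_trans->]] //.
apply/sumsmx_subP => i _; rewrite orbv_inord.
by have := row_sub (Ordinal (leq_subr i d : (d - i < n)%N)) orbmx; rewrite rowK.
Qed.

Definition orbcoord (r : 'rV[F]_n) (m : nat) : F :=
  if (m < n)%N then (r *m invmx orbmx) 0 (inord m) else 0.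

Lemma mul_orbmx (c : 'rV[F]_n) : c *m orbmx = \sum_(m < n) c 0 m *: orbv m.
Proof. by rewrite mulmx_sum_row; apply: eq_bigr => i _; rewrite rowK. Qed.

Lemma orbcoordE (r : 'rV[F]_n) : r = \sum_(m < n) orbcoord r m *: orbv m.
Proof.
rewrite -{1}(mulmxKV orbmx_unit r) mul_orbmx; apply: eq_bigr => i _.
by rewrite /orbcoord ltn_ord inord_val.
Qed.

Lemma orbv_free (c : nat -> F) :
  \sum_(m < n) c m *: orbv m = 0 -> forall m, (m < n)%N -> c m = 0.
Proof.
move=> h m hm.
have : (\row_(i < n) c i) *m orbmx = 0.
  by rewrite mul_orbmx -[RHS]h; apply: eq_bigr => i _; rewrite mxE.
move/(congr1 (mulmx^~ (invmx orbmx))); rewrite mulmxK ?orbmx_unit // mul0mx.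
by move/rowP/(_ (Ordinal hm)); rewrite !mxE.
Qed.

Lemma orbv_coef_inj (c c' : nat -> F) :
  \sum_(m < n) c m *: orbv m = \sum_(m < n) c' m *: orbv m ->
  forall m, (m < n)%N -> c m = c' m.
Proof.
move=> h m hm; apply/eqP; rewrite -subr_eq0; apply/eqP; move: m hm.
apply: (orbv_free (c := fun m => c m - c' m)).
under eq_bigr do rewrite scalerBl.
by rewrite sumrB h subrr.
Qed.

Lemma orbv_mx_inj (M M' : 'M[F]_n) :
  (forall k, (k < n)%N -> orbv k *m M = orbv k *m M') -> M = M'.
Proof.
move=> h; have : orbmx *m M = orbmx *m M'.
  by apply/row_matrixP => i; rewrite !row_mul rowK h.
by move/(congr1 (mulmx (invmx orbmx))); rewrite !mulKmx ?orbmx_unit.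
Qed.

Lemma sum_orbvS (f : nat -> F) :
  \sum_(m < n) f m *: orbv m.+1 =
  \sum_(m < n) (if (m : nat) is m'.+1 then f m' else 0) *: orbv m.
Proof.
rewrite big_ord_recr /= (orbv_eq0 (ltnSn d)) scaler0 addr0.
by rewrite big_ord_recl /= scale0r add0r; apply: eq_bigr.
Qed.

Lemma sum_orbv_shift (c : nat -> F) s :
  \sum_(m < n) c m *: orbv (m + s) =
  \sum_(m < n) (if (s <= m)%N then c (m - s)%N else 0) *: orbv m.
Proof.
elim: s c => [|s IH] c; first by apply: eq_bigr => i _; rewrite addn0 subn0.
have -> : \sum_(m < n) c m *: orbv (m + s.+1) =
    (\sum_(m < n) c m *: orbv (m + s)) *m A.
  by rewrite mulmx_suml; apply: eq_bigr => i _; rewrite -scalemxAl addnS orbvS.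
rewrite IH mulmx_suml.
under eq_bigr do rewrite -scalemxAl -orbvS.
rewrite (sum_orbvS (fun i => if (s <= i)%N then c (i - s)%N else 0)).
apply: eq_bigr => i _; congr (_ *: _).
by case: (nat_of_ord i) => [|m] //=; rewrite ltnS subSS.
Qed.

Lemma orbv_shift_free (c : nat -> F) s :
  \sum_(m < n) c m *: orbv (m + s) = 0 -> forall m, (m + s <= d)%N -> c m = 0.
Proof.
rewrite sum_orbv_shift.
move/(orbv_free (c := fun m => if (s <= m)%N then c (m - s)%N else 0)) => h m hm.
by have := h (m + s)%N; rewrite ltnS hm leq_addl addnK => ->.
Qed.

Lemma mul_orbv_sum (c : nat -> F) k :
  (\sum_(m < n) c m *: orbv m) *m A ^+ k = \sum_(m < n) c m *: orbv (m + k).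
Proof. by rewrite mulmx_suml; apply: eq_bigr => i _; rewrite -scalemxAl orbvD. Qed.

Lemma weakly_lowers_orbv (X : 'M[F]_n) k :
  weakly_lowers Vs X -> exists c, orbv k *m X == c *: orbv k.+1.
Proof.
case=> hX hX0; case: (ltngtP k d) => hk.
- have hpos : (0 < (inord (d - k) : 'I_n))%N by rewrite inordK; lia.
  have := hX _ hpos.
  have -> : (inord (inord (d - k) : 'I_n).-1 : 'I_n) = inord (d - k.+1).
    by apply/val_inj; rewrite /= !inordK; lia.
  rewrite -(orbv_eqmx hk) -(eqmxMr X (orbv_eqmx (ltnW hk))).
  by case/sub_rVP => c hc; exists c; rewrite hc.
- by exists 0; rewrite scale0r orbv_eq0 ?mul0mx.
- exists 0; rewrite hk (orbv_eq0 (ltnSn d)) scaler0.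
  by rewrite mul_orbv_last_eq0 hX0.
Qed.

Lemma weakly_lowersP (X : 'M[F]_n) :
  weakly_lowers Vs X <-> exists x : nat -> F, forall k, orbv k *m X = x k *: orbv k.+1.
Proof.
split=> [hX | [x hx]].
  exists (fun k => xchoose (weakly_lowers_orbv k hX)) => k.
  exact/eqP/(xchooseP (weakly_lowers_orbv k hX)).
split=> [i hi|].
  have := ltn_ord i => hid.
  have -> : (inord i.-1 : 'I_n) = inord (d - (d - i).+1).
    by apply/val_inj; rewrite /= !inordK; lia.
  rewrite -orbv_eqmx; last by lia.
  by rewrite (eqmxMr X (orbv_inord i)) hx scalemx_sub.
by apply/eqP; rewrite -mul_orbv_last_eq0 hx orbv_eq0 ?scaler0.
Qed.

Lemma kerA_orbv (x : 'rV[F]_n) : x *m A = 0 -> (x <= orbv d)%MS.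
Proof.
rewrite {1}(orbcoordE x) -[A]expr1 mul_orbv_sum => /orbv_shift_free h.
rewrite (orbcoordE x) big_ord_recr /= big1 ?add0r ?scalemx_sub // => i _.
by rewrite h ?scale0r // addn1.
Qed.

Section Raising.
Variable R : 'M[F]_n.
Hypothesis rai : raises Vs R.

Lemma raise_coef_ex m : exists r : F,
  ((0 < m <= d)%N ==> (r != 0) && (orbv m *m R == r *: orbv m.-1)).
Proof.
case/boolP: (0 < m <= d)%N => [/andP [hm0 hmd]|]; last by exists 0.
have hlt : ((inord (d - m) : 'I_n) < d)%N by rewrite inordK; lia.
have := rai.1 _ hlt.
have -> : (inord (inord (d - m) : 'I_n).+1 : 'I_n) = inord (d - m.-1).
  by apply/val_inj; rewrite /= !inordK; lia.
move/eqmxP => E; have {}E : (orbv m *m R :=: orbv m.-1)%MS.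
  apply: eqmx_trans (eqmx_trans (eqmxMr _ (orbv_eqmx hmd)) E) (eqmx_sym _).
  by apply: orbv_eqmx; lia.
have : (orbv m *m R <= orbv m.-1)%MS by rewrite E.
case/sub_rVP => r hr; exists r; rewrite hr eqxx andbT /=.
apply: contraTneq (orbv_neq0 (leq_trans (leq_pred m) hmd)) => r0.
by rewrite -mxrank_eq0 -E hr r0 scale0r mxrank0.
Qed.

Definition raise_coef m := xchoose (raise_coef_ex m).

Lemma raise_coefP m : (0 < m <= d)%N ->
  raise_coef m != 0 /\ orbv m *m R = raise_coef m *: orbv m.-1.
Proof.
by move=> hm; have /implyP/(_ hm)/andP [-> /eqP] := xchooseP (raise_coef_ex m).
Qed.

Lemma orbv0_mulR : orbv 0 *m R = 0.
Proof.
by rewrite /orbv expr0 mulmx1; case/submxP: (nz_row_sub (Vs ord_max)) => D ->;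
  rewrite -mulmxA rai.2 mulmx0.
Qed.

Lemma mul_raise_sum (c : nat -> F) :
  (\sum_(m < n) c m *: orbv m) *m R =
  \sum_(m < n) (if (m < d)%N then c m.+1 * raise_coef m.+1 else 0) *: orbv m.
Proof.
rewrite mulmx_suml big_ord_recl /= -scalemxAl orbv0_mulR scaler0 add0r.
rewrite [RHS]big_ord_recr /= ltnn scale0r addr0.
apply: eq_bigr => i _; rewrite ltn_ord /= -scalemxAl.
have hi : (0 < bump 0 i <= d)%N by rewrite /bump /=; have := ltn_ord i; lia.
by rewrite (raise_coefP hi).2 scalerA.
Qed.

Lemma kerR_orbv (x : 'rV[F]_n) : x *m R = 0 -> (x <= orbv 0)%MS.
Proof.
rewrite {1}(orbcoordE x) mul_raise_sum.
move/(orbv_free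
  (c := fun m => if (m < d)%N then orbcoord x m.+1 * raise_coef m.+1 else 0)) => h.
rewrite (orbcoordE x) big_ord_recl big1 ?addr0 ?scalemx_sub // => i _.
have hi : (0 < bump 0 i <= d)%N by rewrite /bump /=; have := ltn_ord i; lia.
have := h i (leq_trans (ltn_ord i) (leqnSn _)); rewrite ltn_ord.
by move/eqP; rewrite mulf_eq0 (negbTE (raise_coefP hi).1) orbF => /eqP ->; rewrite scale0r.
Qed.

Lemma kerR2_orbv (x : 'rV[F]_n) : (0 < d)%N -> x *m R *m R = 0 ->
  exists c0 c1, x = c0 *: orbv 0 + c1 *: orbv 1.
Proof.
move=> hd /kerR_orbv/sub_rVP [a ha].
have [r0 hr] : raise_coef 1 != 0 /\ orbv 1 *m R = raise_coef 1 *: orbv 0.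
  exact: raise_coefP.
have /kerR_orbv/sub_rVP [b hb] : (x - (a / raise_coef 1) *: orbv 1) *m R = 0.
  by rewrite mulmxBl -scalemxAl hr scalerA divfK // ha subrr.
by exists b, (a / raise_coef 1); rewrite -hb subrK.
Qed.

End Raising.

Section ParityProjection.
Variables (P : 'M[F]_n) (par : nat -> bool).
Hypotheses (parS : forall k, par k.+1 = ~~ par k)
  (orbv_par : forall k, orbv k *m P = if par k then orbv k else 0).

Lemma parity_proj_mulA : P *m A = A *m (1%:M - P).
Proof.
apply: orbv_mx_inj => k _; rewrite !mulmxA orbv_par -orbvS mulmxBr mulmx1.
by rewrite orbv_par parS; case: (par k); rewrite ?mul0mx ?subr0 ?subrr -?orbvS.
Qed.

Lemma orbv_mul_AP_PA (a b : F) k :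
  orbv k *m (a *: (A *m P) + b *: (P *m A)) = (if par k then b else a) *: orbv k.+1.
Proof.
rewrite mulmxDr -!scalemxAr !mulmxA -orbvS !orbv_par parS.
by case: (par k); rewrite ?mul0mx ?scaler0 ?add0r ?addr0 // orbvS.
Qed.

Lemma parity_proj_mulR (R : 'M[F]_n) : raises Vs R -> P *m R = R *m (1%:M - P).
Proof.
move=> rai; apply: orbv_mx_inj => -[|k] hk; rewrite !mulmxA orbv_par.
  by rewrite (orbv0_mulR rai) mul0mx; case: (par 0); rewrite ?mul0mx ?(orbv0_mulR rai).
have hk1 : (0 < k.+1 <= d)%N by lia.
have [_ ER] := raise_coefP rai hk1.
rewrite ER -scalemxAl mulmxBr mulmx1 orbv_par parS /=.
by case: (par k); rewrite /= ?mul0mx ?subr0 ?subrr ?scaler0.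
Qed.

End ParityProjection.

End OrbitBasis.

Section LRTriple.
Variables (F : fieldType) (d : nat) (A B C : 'M[F]_d.+1) (VAB VAC : 'I_d.+1 -> 'M[F]_d.+1).
Hypotheses (trip : LR_triple A B C) (hAB : is_LRdec VAB A B) (hAC : is_LRdec VAC A C).
Local Notation n := d.+1.
Local Notation decAB := hAB.1.
Local Notation lowAB := hAB.2.1.
Local Notation decAC := hAC.1.
Local Notation lowAC := hAC.2.1.
Local Notation ub := (orbv VAB A).
Local Notation uc := (orbv VAC A).

Definition tcoef m := orbcoord VAB A (uc 0) m.

Lemma tcoef_eq0 m : (d < m)%N -> tcoef m = 0.
Proof. by move=> h; rewrite /tcoef /orbcoord ltnNge h. Qed.

Lemma uc0_expand : uc 0 = \sum_(m < n) tcoef m *: ub m.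
Proof. exact: (orbcoordE decAB lowAB). Qed.

Lemma uc_expand k : uc k = \sum_(m < n) tcoef m *: ub (m + k).
Proof. by rewrite -{1}[k]add0n orbvD uc0_expand mul_orbv_sum. Qed.

Lemma uc_last : uc d = tcoef 0 *: ub d.
Proof.
rewrite uc_expand (sum_orbv_shift decAB lowAB) big_ord_recr /= leqnn subnn.
rewrite big1 ?add0r // => i _; rewrite leqNgt ltn_ord scale0r //.
Qed.

Lemma tcoef0_neq0 : tcoef 0 != 0.
Proof.
apply: contraNneq (orbv_neq0 decAC lowAC (leqnn d)) => t0.
by rewrite uc_last t0 scale0r.
Qed.

Lemma uc_last_pred : (0 < d)%N -> uc d.-1 = tcoef 0 *: ub d.-1 + tcoef 1 *: ub d.
Proof.
move=> hd; rewrite uc_expand (big_ord_first2 (G := fun m => tcoef m *: ub (m + d.-1))) //.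
  by rewrite add0n add1n prednK.
by move=> m hm; rewrite (orbv_eq0 decAB lowAB) ?scaler0 //; lia.
Qed.

(* ub k lies in the (d - k)-th component of the (A,B)-decomposition. *)
Definition even_level k := odd k == odd d.

Lemma even_levelS k : even_level k.+1 = ~~ even_level k.
Proof. by rewrite /even_level /=; case: (odd k); case: (odd d). Qed.

Definition even_proj : 'M[F]_n := \sum_(j < n | ~~ odd j) projE VAB j.
Local Notation J := even_proj.

Lemma ub_mulJ k : ub k *m J = if even_level k then ub k else 0.
Proof.
case: (leqP k d) => hk; last by rewrite (orbv_eq0 decAB lowAB) ?mul0mx //; case: ifP.
set i0 : 'I_n := inord (d - k).
have sub0 : (ub k <= VAB i0)%MS by rewrite (orbv_eqmx decAB lowAB hk).
have -> : even_level k = ~~ odd i0.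
  by rewrite /i0 inordK ?ltnS ?leq_subr // oddB // /even_level; case: (odd k); case: (odd d).
rewrite /even_proj mulmx_sumr; case: (boolP (~~ odd i0)) => h.
  rewrite (bigD1 i0) //= (projE_id decAB sub0) big1 ?addr0 // => j /andP [_ ji].
  by apply: (projE_0 decAB sub0); rewrite eq_sym.
by rewrite big1 // => j hj; apply: (projE_0 decAB sub0); apply: contraNneq h => ->.
Qed.

Lemma J_mulA : J *m A = A *m (1%:M - J).
Proof. exact: (parity_proj_mulA decAB lowAB even_levelS ub_mulJ). Qed.

Lemma J_mulB : J *m B = B *m (1%:M - J).
Proof. exact: (parity_proj_mulR decAB lowAB even_levelS ub_mulJ hAB.2.2). Qed.

Definition tcoef_even := forall m, odd m -> tcoef m = 0.

Lemma uc_mulJ : tcoef_even -> forall k, uc k *m J = if even_level k then uc k else 0.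
Proof.
move=> te k; rewrite uc_expand mulmx_suml.
under eq_bigr => m _ do rewrite -scalemxAl ub_mulJ.
case: ifP => hk; last first.
  rewrite big1 // => m _; case: (boolP (odd m)) => hm; first by rewrite te ?scale0r.
  by rewrite /even_level oddD (negbTE hm) -/(even_level k) hk scaler0.
apply: eq_bigr => m _; case: (boolP (odd m)) => hm; first by rewrite te ?scale0r.
by rewrite /even_level oddD (negbTE hm) -/(even_level k) hk.
Qed.

Lemma J_mulC : tcoef_even -> J *m C = C *m (1%:M - J).
Proof. by move=> te; exact: (parity_proj_mulR decAC lowAC even_levelS (uc_mulJ te) hAC.2.2). Qed.

Lemma mxtrace_projE_J (Y : 'I_n -> 'M[F]_n) (R M : 'M[F]_n) (v : 'rV[F]_n) (b : bool) :
  is_decomp Y -> raises Y R -> J *m R = R *m (1%:M - J) -> J *m M = M *m (1%:M - J) ->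
  (Y ord0 <= v)%MS -> v *m J = (if b then 0 else v) ->
  forall i, \tr (M *m projE Y i) = 0.
Proof.
move=> decY raiY JR JM Y0v vJ i.
apply: (mxtrace_swap_mul_projE decY (pb := fun j => b (+) odd j) i _ JM).
apply: (decomp_mul_parity raiY JR).
by case/submxP: Y0v => D ->; rewrite -mulmxA vJ; case: ifP; rewrite ?mulmx0.
Qed.

Lemma tcoef_even_bipartite : tcoef_even -> bipartite A B C.
Proof.
move=> te Y1 Y2 Y3 [dec1 [low1 rai1]] [dec2 [low2 rai2]] [dec3 [low3 rai3]] i; split.
- apply: (mxtrace_projE_J (b := false) dec1 rai1 J_mulB (J_mulC te)
    (sub_kernel_rows (kerA_orbv decAB lowAB) low1.2)).
  by rewrite ub_mulJ /even_level eqxx.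
- apply: (mxtrace_projE_J (b := odd d) dec2 rai2 (J_mulC te) J_mulA
    (sub_kernel_rows (kerR_orbv decAB lowAB hAB.2.2) low2.2)).
  by rewrite ub_mulJ /even_level; case: (odd d).
- apply: (mxtrace_projE_J (b := odd d) dec3 rai3 J_mulA J_mulB
    (sub_kernel_rows (kerR_orbv decAC lowAC hAC.2.2) low3.2)).
  by rewrite (uc_mulJ te) /even_level; case: (odd d).
Qed.

Lemma bipartite_tcoef1 : (0 < d)%N -> bipartite A B C -> tcoef 1 = 0.
Proof.
move=> hd bip; case: trip => _ [_ [[Y2 h2] [_ [[Y3 h3] _]]]].
have [trCE0 _ _] := bip VAB Y2 Y3 hAB h2 h3 ord0.
have ub_d0 : (ub d <= VAB ord0)%MS by rewrite (orbv_last decAB lowAB).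
have hdd : (0 < d <= d)%N by rewrite hd leqnn.
have [psi_nz psiE] := raise_coefP decAC lowAC hAC.2.2 hdd.
set psi := raise_coef _ _ _ d in psi_nz psiE.
have ubE : ub d = (tcoef 0)^-1 *: uc d by rewrite uc_last scalerA mulVf ?tcoef0_neq0 ?scale1r.
have ub_pred0 : ub d.-1 *m projE VAB ord0 = 0.
  apply: (projE_0 decAB (j := inord 1)).
    by rewrite (orbv_eqmx decAB lowAB (leq_pred d)) (_ : d - d.-1 = 1)%N //; lia.
  by apply/eqP => /(congr1 val); rewrite /= inordK //; lia.
have : ub d *m C *m projE VAB ord0 = ((tcoef 0)^-1 * psi * tcoef 1) *: ub d.
  rewrite {1}ubE -!scalemxAl psiE (uc_last_pred hd) -!scalemxAl mulmxDl -!scalemxAl.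
  by rewrite ub_pred0 (projE_id decAB ub_d0) scaler0 add0r !scalerA.
move/(mxtrace_mul_projE decAB (orbv_neq0 decAB lowAB (leqnn d)) ub_d0).
rewrite trCE0 => /esym/eqP; rewrite !mulf_eq0 invr_eq0 (negbTE tcoef0_neq0).
by rewrite (negbTE psi_nz) => /eqP.
Qed.

Lemma ucB_span01 : (0 < d)%N ->
  uc 0 *m B != 0 /\ exists c0 c1, uc 0 *m B = c0 *: uc 0 + c1 *: uc 1.
Proof.
(* The 0-th component of the (C,B)-decomposition is ker C = <uc 0>, so uc 0 B spans
   its first component, which C ^+ 2 kills. *)
move=> hd; case: trip => _ [_ [_ [[Y [decY [lowY raiY]]] _]]].
have Y0_uc : (Y ord0 <= uc 0)%MS.
  exact: sub_kernel_rows (kerR_orbv decAC lowAC hAC.2.2) lowY.2.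
have EY0 : (Y ord0 :=: uc 0)%MS.
  apply/eqmxP; rewrite -(mxrank_leqif_eq Y0_uc) rank_rV.
  by rewrite (orbv_neq0 decAC lowAC (leq0n d)) (rank_decomp decY).
have EY1 : (uc 0 *m B :=: Y (inord 1))%MS.
  exact: eqmx_trans (eqmxMr B (eqmx_sym EY0)) (eqmxP (raiY.1 ord0 hd)).
split; first by rewrite -mxrank_eq0 EY1 (rank_decomp decY).
apply: (kerR2_orbv decAC lowAC hAC.2.2 hd).
have : (uc 0 *m B *m C <= Y ord0)%MS.
  have h1 : (0 < (inord 1 : 'I_n))%N by rewrite inordK.
  rewrite (eqmxMr C EY1) (eqmxP (lowY.1 _ h1)).
  by have -> : (inord (inord 1 : 'I_n).-1 : 'I_n) = ord0 by apply/val_inj; rewrite /= !inordK.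
by case/submxP=> D ->; rewrite -mulmxA lowY.2 mulmx0.
Qed.

Local Notation bcoef := (raise_coef decAB lowAB hAB.2.2).

Lemma tcoef_recurrence c0 c1 : uc 0 *m B = c0 *: uc 0 + c1 *: uc 1 ->
  forall m, (m < n)%N ->
  (if (m < d)%N then tcoef m.+1 * bcoef m.+1 else 0) =
  c0 * tcoef m + c1 * (if m is m'.+1 then tcoef m' else 0).
Proof.
move=> hB; apply: (orbv_coef_inj decAB lowAB).
rewrite -mul_raise_sum -uc0_expand hB !uc_expand.
under eq_bigr do rewrite addn0.
under [in c1 *: _]eq_bigr do rewrite addn1.
rewrite (sum_orbvS decAB lowAB) !scaler_sumr -big_split /=.
by apply: eq_bigr => i _; rewrite !scalerA -scalerDl.
Qed.

Lemma tcoef1_eq0_even : tcoef 1 = 0 -> tcoef_even /\ ((0 < d)%N -> tcoef 2 != 0).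
Proof.
move=> t10; case: (posnP d) => [d0 | hd].
  by split=> // -[|m] // _; rewrite tcoef_eq0 // d0.
have [zB_nz [c0 [c1 zB]]] := ucB_span01 hd.
have rec := tcoef_recurrence zB.
have c00 : c0 = 0.
  move: (rec 0%N isT); rewrite hd t10 mul0r mulr0 addr0 => /esym/eqP.
  by rewrite mulf_eq0 (negbTE tcoef0_neq0) orbF => /eqP.
split.
  have t_odd k : tcoef k.*2.+1 = 0.
    elim: k => [//|k IH]; rewrite doubleS.
    case: (ltnP k.*2.+2 d) => hk; last by rewrite tcoef_eq0 //; lia.
    have hk3 : (0 < k.*2.+3 <= d)%N by rewrite hk.
    move: (rec k.*2.+2 (ltnW hk)); rewrite hk IH c00 mul0r mulr0 add0r => /eqP.
    by rewrite mulf_eq0 (negbTE (raise_coefP _ _ _ hk3).1) orbF => /eqP.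
  by move=> m hm; rewrite -(odd_double_half m) hm t_odd.
move=> _; apply: contraNneq zB_nz => t20.
have c10 : c1 = 0.
  move: (rec 1%N hd); rewrite t20 mul0r c00 mul0r add0r if_same.
  by move=> /esym/eqP; rewrite mulf_eq0 (negbTE tcoef0_neq0) orbF => /eqP.
by rewrite zB c00 c10 !scale0r addr0.
Qed.

Lemma Abar_orbv_coefs (X : 'M[F]_n) : Abar VAB VAC X ->
  exists x : nat -> F, (forall k, ub k *m X = x k *: ub k.+1) /\
    (forall j m, (m + j.+1 <= d)%N -> tcoef m * x (m + j)%N = tcoef m * x j).
Proof.
case=> /(weakly_lowersP decAB lowAB) [x hx] /(weakly_lowersP decAC lowAC) [y hy].
exists x; split=> // j m hm.
have H : \sum_(m < n) (tcoef m * x (m + j)%N - y j * tcoef m) *: ub (m + j.+1) = 0.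
  rewrite (eq_bigr (fun m : 'I_n =>
    tcoef m *: (ub (m + j) *m X) - y j *: (tcoef m *: ub (m + j.+1)))); last first.
    by move=> i _; rewrite hx !scalerA addnS scalerBl.
  rewrite sumrB -scaler_sumr -uc_expand -hy uc_expand mulmx_suml -sumrB.
  by rewrite big1 // => i _; rewrite -scalemxAl subrr.
have L := orbv_shift_free decAB lowAB
  (c := fun m => tcoef m * x (m + j)%N - y j * tcoef m) H.
have := L 0%N; rewrite !add0n => /(_ (leq_trans (leq_addl _ _) hm)) /eqP.
rewrite subr_eq0 mulrC => /eqP /mulIf => /(_ tcoef0_neq0) yx.
by have /eqP := L m hm; rewrite subr_eq0 -yx => /eqP ->; rewrite mulrC.
Qed.

Lemma Abar_nonbipartite : tcoef 1 != 0 ->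
  free [:: A] /\ (forall X, Abar VAB VAC X <-> X \in <<[:: A]>>%VS).
Proof.
move=> t1nz; have hd : (0 < d)%N.
  by rewrite lt0n; apply: contraNneq t1nz => d0; rewrite tcoef_eq0 // d0.
split.
  rewrite seq1_free; apply: contraNneq (orbv_neq0 decAB lowAB hd) => A0.
  by rewrite orbvS A0 mulmx0.
move=> X; rewrite span_seq1; split.
  case/Abar_orbv_coefs => x [hx rel].
  have xconst k : (k < d)%N -> x k = x 0%N.
    elim: k => [//|k IH] hk; rewrite -IH ?(ltnW hk) //.
    by apply: (mulfI t1nz); rewrite -(rel k 1%N) ?add1n.
  apply/vlineP; exists (x 0%N); apply: (orbv_mx_inj decAB lowAB) => k _.
  rewrite hx -scalemxAr -orbvS; case: (ltnP k d) => hkd; first by rewrite xconst.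
  by rewrite (orbv_eq0 decAB lowAB) ?scaler0 //; lia.
case/vlineP => c ->.
by split; [apply/(weakly_lowersP decAB lowAB) | apply/(weakly_lowersP decAC lowAC)];
  exists (fun=> c) => k; rewrite -scalemxAr -orbvS.
Qed.

Lemma comb_AJ_JA_eq0 (a b : F) : (1 < d)%N ->
  a *: (A *m J) + b *: (J *m A) = 0 -> a = 0 /\ b = 0.
Proof.
move=> hd2 h0.
have coef k : (k < d)%N -> (if even_level k then b else a) = 0.
  move=> hk; have := orbv_mul_AP_PA even_levelS ub_mulJ a b k.
  rewrite h0 mulmx0 => /esym/eqP.
  by rewrite scaler_eq0 (negbTE (orbv_neq0 decAB lowAB hk)) orbF => /eqP.
have e1 : even_level d.-1 = false.
  by rewrite /even_level -{2}(ltn_predK hd2) /=; case: (odd d.-1).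
have e2 : even_level d.-2 = true.
  by rewrite /even_level -{2}(_ : d.-2.+2 = d) /= ?negbK //; lia.
by split; [have := coef d.-1; rewrite e1 | have := coef d.-2; rewrite e2];
  apply; lia.
Qed.

Lemma free_AJ_JA : (1 < d)%N -> free [:: A *m J; J *m A].
Proof.
move=> hd2; rewrite free_cons span_seq1 seq1_free; apply/andP; split.
  apply/vlineP => -[k hk]; have /(comb_AJ_JA_eq0 hd2) [/eqP] :
      1 *: (A *m J) + (- k) *: (J *m A) = 0 by rewrite hk scale1r scaleNr subrr.
  by rewrite oner_eq0.
apply/eqP => JA0; have /(comb_AJ_JA_eq0 hd2) [_ /eqP] :
    0 *: (A *m J) + 1 *: (J *m A) = 0 by rewrite JA0 scale0r scaler0 addr0.
by rewrite oner_eq0.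
Qed.

Lemma Abar_bipartite : (0 < d)%N -> tcoef 1 = 0 ->
  free [:: A *m J; J *m A] /\
  (forall X, Abar VAB VAC X <-> X \in <<[:: A *m J; J *m A]>>%VS).
Proof.
move=> hd t10; have [te /(_ hd) t2nz] := tcoef1_eq0_even t10.
have hd2 : (1 < d)%N by apply: contraNT t2nz; rewrite -leqNgt => hd1; rewrite tcoef_eq0.
split=> [|X]; first exact: free_AJ_JA.
rewrite memv_span2; split.
  case/Abar_orbv_coefs => x [hx rel].
  have x2per j : (j.+3 <= d)%N -> x j.+2 = x j.
    by move=> hj; apply: (mulfI t2nz); rewrite -(rel j 2%N) ?add2n.
  exists (x (~~ odd d)), (x (odd d)); apply: (orbv_mx_inj decAB lowAB) => k _.
  rewrite hx (orbv_mul_AP_PA even_levelS ub_mulJ).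
  case: (ltnP k d) => hkd; last by rewrite (orbv_eq0 decAB lowAB) ?scaler0 //; lia.
  rewrite (eq_odd_of_2periodic x2per hkd) /even_level.
  by case: (odd k); case: (odd d).
case=> a [b ->]; split.
  by apply/(weakly_lowersP decAB lowAB); exists (fun k => if even_level k then b else a);
    apply: (orbv_mul_AP_PA even_levelS ub_mulJ).
by apply/(weakly_lowersP decAC lowAC); exists (fun k => if even_level k then b else a);
  apply: (orbv_mul_AP_PA even_levelS (uc_mulJ te)).
Qed.
End LRTriple.

Theorem theorem20p3 (F : fieldType) (d : nat) (A B C : 'M[F]_d.+1)
  (VAB VAC : 'I_d.+1 -> 'M[F]_d.+1) :
  LR_triple A B C -> is_LRdec VAB A B -> is_LRdec VAC A C ->
  [/\ (d = 0%N -> forall X, Abar VAB VAC X <-> X = 0),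
      (~ bipartite A B C ->
         free [:: A] /\ (forall X, Abar VAB VAC X <-> X \in <<[:: A]>>%VS))
    & (bipartite A B C -> (0 < d)%N ->
         let J := \sum_(j < d.+1 | ~~ odd j) projE VAB j in
         free [:: A *m J; J *m A] /\
         (forall X, Abar VAB VAC X <-> X \in <<[:: A *m J; J *m A]>>%VS))].
Proof.
move=> trip hAB hAC; split.
- move=> d0 X; subst d; split=> [[hX _] | ->]; last by split; apply: weakly_lowers0.
  exact: weakly_lowers_dim1 hAB.1 hX.
- move=> nonbip; apply: (Abar_nonbipartite hAB hAC); apply/eqP => t10.
  by apply/nonbip/(tcoef_even_bipartite hAB hAC)/(tcoef1_eq0_even trip hAB hAC t10).1.
- move=> bip hd; exact: Abar_bipartite trip hAB hAC hd (bipartite_tcoef1 trip hAB hAC hd bip).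
Qed.
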